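(* Let $G$ be a group, $s$ a central involution of $G$, and $(L,\zeta)$ a connected $G$-gain graph such that $L$ is isomorphic to the line graph $L(\Gamma)$ of some graph $\Gamma$ and $L$ is not isomorphic to any of $F_1,F_2,F_3$. Then $(L,\zeta)$ is a gain-line graph if and only if every odd triangle of $L$ has gain $s$.
   Context: Graphs are finite and simple. A $G$-gain graph $(\Gamma,\psi)$: graph with a map $\psi$ on ordered pairs of adjacent vertices into $G$ with $\psi(v,u)=\psi(u,v)^{-1}$. Line graph $L(\Gamma)$: vertex set $E_\Gamma$, edges adjacent iff sharing an endpoint. With $V_\Gamma=\{v_1,\dots,v_n\}$, $E_\Gamma=\{e_1,\dots,e_m\}$, a $G$-phase of $\Gamma$ is a matrix $H$ with $H_{i,k}\in G$ if $v_i\in e_k$, $0$ otherwise; $\Psi_L(H)(e_p,e_q)=s\,(H_{r,p})^{-1}H_{r,q}$ with $v_r$ the common endpoint of $e_p,e_q$. $(L,\zeta)$ is a gain-line graph (w.r.t. $s$) if there are a graph $\Gamma$, a graph isomorphism $\phi:L(\Gamma)\to L$ and a $G$-phase $H$ of $\Gamma$ with $\Psi_L(H)=\zeta\circ\phi$. A triangle's gain is $\zeta(v_1,v_2)\zeta(v_2,v_3)\zeta(v_3,v_1)$ (whether it equals the central element $s$ is independent of starting vertex and orientation). A triangle $\{v_1,v_2,v_3\}$ is odd if some vertex $w$ of $L$ is adjacent to an odd number of $v_1,v_2,v_3$. $F_1$ is the diamond ($K_4$ minus an edge); $F_2$ is the wheel consisting of a $4$-cycle and a hub adjacent to its four vertices;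 $F_3$ is the octahedron $K_{2,2,2}$. *)

From mathcomp Require Import all_boot.
Set Implicit Arguments. Unset Strict Implicit. Unset Printing Implicit Defensive.

Definition simple_graph (T : finType) (e : rel T) : Prop :=
  symmetric e /\ irreflexive e.

Definition connected_graph (T : finType) (e : rel T) : Prop :=
  forall x y, connect e x y.

Definition graph_iso (T1 T2 : finType) (e1 : rel T1) (e2 : rel T2) : Prop :=
  exists f : T1 -> T2, bijective f /\ forall x y, e2 (f x) (f y) = e1 x y.

Definition simple_inc (V E : finType) (inc : E -> {set V}) : Prop :=
  (forall k, #|inc k| = 2) /\ injective inc.

Definition line_adj (V E : finType) (inc : E -> {set V}) : rel E :=
  fun p q => (p != q) && (inc p :&: inc q != set0).

Definition is_line_graph (T : finType) (e : rel T) : Prop :=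
  exists (V E : finType) (inc : E -> {set V}),
    simple_inc inc /\ graph_iso (line_adj inc) e.

(* F1: diamond, K4 minus the edge {0,1}. *)
Definition F1 : rel 'I_4 := fun i j => (i != j) && ((i : nat) + j != 1).
(* F2: wheel, 4-cycle 0-1-2-3-0 plus hub 4. *)
Definition F2 : rel 'I_5 :=
  fun i j => (i != j) && [|| (i : nat) == 4, (j : nat) == 4 | odd (i + j)].
(* F3: octahedron K_{2,2,2} with parts {0,1},{2,3},{4,5}. *)
Definition F3 : rel 'I_6 := fun i j => ((i : nat) %/ 2 != (j : nat) %/ 2).

Local Open Scope group_scope.

(* A G-gain graph (e, zeta): zeta(v,u) = zeta(u,v)^-1 on adjacent pairs
   (values of zeta on non-adjacent pairs are irrelevant). *)
Definition gain_graph (G : groupType) (T : finType) (e : rel T) (zeta : T -> T -> G) : Prop :=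
  forall u v, e u v -> zeta v u = (zeta u v)^-1.

(* Gain-line graph w.r.t. s: there are a graph Gamma = (V,E,inc), a graph
   isomorphism phi : L(Gamma) -> L and a G-phase H of Gamma (entries H r k
   only matter when v_r is an endpoint of e_k) with Psi_L(H) = zeta o phi, where
   Psi_L(H)(p,q) = s * (H r p)^-1 * H r q for the common endpoint r of p, q. *)
Definition gain_line_graph (G : groupType) (s : G) (T : finType) (e : rel T)
    (zeta : T -> T -> G) : Prop :=
  exists (V E : finType) (inc : E -> {set V}) (phi : E -> T) (H : V -> E -> G),
    [/\ simple_inc inc, bijective phi,
        (forall p q, e (phi p) (phi q) = line_adj inc p q) &
        (forall p q r, line_adj inc p q -> r \in inc p -> r \in inc q ->
           s * (H r p)^-1 * H r q = zeta (phi p) (phi q))].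

Definition triangle_gain (G : groupType) (T : finType) (zeta : T -> T -> G) (v1 v2 v3 : T) : G :=
  zeta v1 v2 * zeta v2 v3 * zeta v3 v1.

Definition odd_triangle (T : finType) (e : rel T) (v1 v2 v3 : T) : Prop :=
  exists w, odd (e w v1 + e w v2 + e w v3)%N.

(* A triangle of L = L(Gamma) is either a
   *star* (three edges of Gamma through a common vertex r) or comes from a
   triangle of Gamma; the latter kind is always even.

   Necessity: for a phase H, the gain of a star triangle telescopes to s^3 = s
   (star_triangle_gain), and odd triangles are stars.
   Sufficiency: if every star triangle has gain s, fix at each vertex r a
   reference edge p0 and put H(r,p0) = 1, H(r,q) = s zeta(p0,q); the star
   condition is exactly what makes Psi_L(H) = zeta (phase_of_star_gains).
   If every star triangle is odd we are done, since odd triangles have gain s.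
   Otherwise some star ra, rb, rc is even; then every edge of Gamma touching
   {r,a,b,c} stays inside it, so by connectivity Gamma lives on these four
   vertices, and according to which of ab, bc, ca are present L is K3, F1, F2
   or F3 (even_star_exceptional).  The exceptions are excluded by hypothesis,
   and K3 is the line graph of a triangle, which has no star triangles. *)

From mathcomp Require Import all_boot.

Set Implicit Arguments.
Unset Strict Implicit.
Unset Printing Implicit Defensive.

Section TwoElementSets.
Variable V : finType.
Implicit Types (A : {set V}) (u v x y : V).

Lemma set2_eqE u v u' v' :
  ([set u; v] == [set u'; v']) = (u == u') && (v == v') || (u == v') && (v == u').
Proof.
apply/eqP/idP => [E|/orP[]/andP[/eqP-> /eqP->] //]; last by rewrite setUC.
have hu : u \in [set u'; v'] by rewrite -E !inE eqxx.
have hv : v \in [set u'; v'] by rewrite -E !inE eqxx orbT.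
have hu' : u' \in [set u; v] by rewrite E !inE eqxx.
have hv' : v' \in [set u; v] by rewrite E !inE eqxx orbT.
move: hu hv hu' hv'; rewrite !inE.
by do 4 (case/orP=> /eqP ?; try subst); rewrite ?eqxx ?orbT.
Qed.

Lemma setI2_neq0 A u v : (A :&: [set u; v] != set0) = (u \in A) || (v \in A).
Proof.
apply/set0Pn/orP => [[w /setIP[wA /set2P[] wE]]|[uA|vA]]; rewrite -?wE; [by left|by right| |];
  by [exists u; rewrite !inE uA eqxx | exists v; rewrite !inE vA eqxx orbT].
Qed.

Lemma card2_set2 A x y : #|A| = 2 -> x \in A -> y \in A -> x != y -> A = [set x; y].
Proof.
move=> A2 xA yA xy; apply/eqP; rewrite eq_sym eqEcard A2 cards2 xy leqnn andbT.
by apply/subsetP => z /set2P[]->.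
Qed.

Lemma card2_other A x : #|A| = 2 -> x \in A -> exists2 y, x != y & A = [set x; y].
Proof.
move=> /eqP/cards2P[u [w [uw ->]]]; rewrite !inE => /orP[]/eqP->; first by exists w.
by exists u; rewrite 1?eq_sym // setUC.
Qed.

Lemma card2_sub_set4 A r a b c : #|A| = 2 -> A \subset [set r; a; b; c] ->
  A = [set r; a] \/ A = [set r; b] \/ A = [set r; c] \/
  A = [set a; b] \/ A = [set b; c] \/ A = [set c; a].
Proof.
move=> /eqP/cards2P[u [w [uw ->]]] /subsetP sub.
have := sub u; have := sub w; rewrite !inE !eqxx ?orbT => /(_ isT) hw /(_ isT) hu.
move: hu hw uw; rewrite -!orbA => /or4P[]/eqP-> /or4P[]/eqP->; rewrite ?eqxx // => _;
  do ![left; solve [reflexivity | exact: setUC] | right | solve [reflexivity | exact: setUC]].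
Qed.

End TwoElementSets.

Section LineGraph.
Variables (V E : finType) (inc : E -> {set V}).
Hypothesis sinc : simple_inc inc.

Lemma line_adj_sym : symmetric (line_adj inc).
Proof. by move=> p q; rewrite /line_adj eq_sym setIC. Qed.

Lemma line_adj_common p q r : p != q -> r \in inc p -> r \in inc q -> line_adj inc p q.
Proof. by move=> pq rp rq; rewrite /line_adj pq; apply/set0Pn; exists r; rewrite inE rp rq. Qed.

Lemma edge_eq_ends p q u v : inc p = [set u; v] -> u != v ->
  (q == p) = (u \in inc q) && (v \in inc q).
Proof.
have [ic iinc] := sinc; move=> hp uv.
apply/eqP/andP => [->|[uq vq]]; first by rewrite hp !inE !eqxx orbT.
by apply: iinc; rewrite hp; exact: card2_set2.
Qed.

Lemma line_adj_pendant x y v u : inc x = [set v; u] -> u \notin inc y ->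
  line_adj inc x y = (v \in inc y).
Proof.
move=> hx uy; rewrite /line_adj setIC hx setI2_neq0 (negbTE uy) orbF.
case: eqP => [xy|//]; by move: uy; rewrite -xy hx !inE eqxx orbT.
Qed.

(* Three pairwise adjacent edges either share a vertex, or they form a
   triangle {a,c}, {a,b}, {b,c} of Gamma; then any edge q meets 0 or 2 of them
   (q cannot contain all of a, b, c), so the triangle of L is even. *)
Lemma line_triangle_star_or_even p1 p2 p3 :
  line_adj inc p1 p2 -> line_adj inc p2 p3 -> line_adj inc p1 p3 ->
  (exists r, [&& r \in inc p1, r \in inc p2 & r \in inc p3]) \/
  (forall q, ~~ odd (line_adj inc q p1 + line_adj inc q p2 + line_adj inc q p3)).
Proof.
move=> a12 a23 a13; have [ic _] := sinc.
case: (boolP [exists r, [&& r \in inc p1, r \in inc p2 & r \in inc p3]]);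
  [by move/existsP; left | move/existsPn => no_r; right].
have [a /setIP[a1 a2]] := set0Pn _ (proj2 (andP a12)).
have [b /setIP[b2 b3]] := set0Pn _ (proj2 (andP a23)).
have [c /setIP[c1 c3]] := set0Pn _ (proj2 (andP a13)).
have ab : a != b by apply/eqP => eab; move: (no_r a); rewrite a1 a2 eab b3.
have ac : a != c by apply/eqP => eac; move: (no_r a); rewrite a1 a2 eac c3.
have bc : b != c by apply/eqP => ebc; move: (no_r b); rewrite b2 b3 ebc c1.
have E1 := card2_set2 (ic p1) a1 c1 ac.
have E2 := card2_set2 (ic p2) a2 b2 ab.
have E3 := card2_set2 (ic p3) b3 c3 bc.
move=> q; have not_abc : ~~ [&& a \in inc q, b \in inc q & c \in inc q].
  apply/and3P => [[aq bq cq]]; move: cq; rewrite (card2_set2 (ic q) aq bq ab) !inE.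
  by rewrite eq_sym (negbTE ac) eq_sym (negbTE bc).
rewrite /line_adj (edge_eq_ends q E1 ac) (edge_eq_ends q E2 ab) (edge_eq_ends q E3 bc).
rewrite E1 E2 E3 !setI2_neq0.
by move: not_abc; case: (a \in inc q); case: (b \in inc q); case: (c \in inc q).
Qed.

Definition star (r : V) (p1 p2 p3 : E) : bool :=
  [&& r \in inc p1, r \in inc p2, r \in inc p3 & uniq [:: p1; p2; p3]].

Lemma star_adj r p1 p2 p3 : star r p1 p2 p3 ->
  [/\ line_adj inc p1 p2, line_adj inc p2 p3 & line_adj inc p1 p3].
Proof.
case/and4P=> r1 r2 r3; rewrite /= !inE negb_or andbT => /andP[/andP[n12 n13] n23].
by split; apply: (line_adj_common (r := r)).
Qed.

Definition claw (r a b c : V) (pa pb pc : E) : Prop :=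
  [/\ uniq [:: r; a; b; c], inc pa = [set r; a], inc pb = [set r; b] & inc pc = [set r; c]].

Lemma star_claw r p1 p2 p3 : star r p1 p2 p3 -> exists a b c, claw r a b c p1 p2 p3.
Proof.
have [ic iinc] := sinc.
move=> st; have /and4P[r1 r2 r3 _] := st; have [a12 a23 a13] := star_adj st.
have [a ra E1] := card2_other (ic p1) r1.
have [b rb E2] := card2_other (ic p2) r2.
have [c rc E3] := card2_other (ic p3) r3.
have leaves_differ x y (u w : V) :
    line_adj inc x y -> inc x = [set r; u] -> inc y = [set r; w] -> u != w.
  by case/andP=> xy _ hx hy; apply: contraNneq xy => uw; apply/eqP/iinc; rewrite hx hy uw.
exists a, b, c; split=> //=; rewrite !inE !negb_or -!andbA ra rb rc.
by rewrite (leaves_differ _ _ _ _ a12 E1 E2) (leaves_differ _ _ _ _ a13 E1 E3)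
  (leaves_differ _ _ _ _ a23 E2 E3).
Qed.

Lemma claw_rotate r a b c pa pb pc : claw r a b c pa pb pc -> claw r b c a pb pc pa.
Proof.
case=> uq hpa hpb hpc; split=> //.
by rewrite cons_uniq -[[:: b; c; a]]/(rot 1 [:: a; b; c]) mem_rot rot_uniq.
Qed.

Definition claw_spans (a b c : V) (pa pb pc : E) : Prop :=
  forall z, z = pa \/ z = pb \/ z = pc \/
            inc z = [set a; b] \/ inc z = [set b; c] \/ inc z = [set c; a].

Lemma spans_rotate a b c pa pb pc : claw_spans a b c pa pb pc -> claw_spans b c a pb pc pa.
Proof. by move=> sp z; have := sp z; tauto. Qed.

Lemma edge_on_set (A : {set V}) : (exists x, inc x = A) \/ (forall x, inc x <> A).
Proof.
case: (pickP (fun x => inc x == A)) => [x /eqP|none]; first by left; exists x.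
by right=> x /eqP; rewrite none.
Qed.

End LineGraph.

(* The triangle K3, realised as the line graph of a triangle: edge k of the
   triangle on 'I_3 is the one avoiding vertex k. *)
Definition K3 : rel 'I_3 := fun i j => i != j.

Definition triangle_inc (k : 'I_3) : {set 'I_3} := [set~ k].

Lemma triangle_inc_simple : simple_inc triangle_inc.
Proof.
split=> [k|i j /setC_inj/set1_inj //]; by rewrite cardsC1 card_ord.
Qed.

Lemma triangle_inc_adj : line_adj triangle_inc =2 K3.
Proof.
move=> i j; rewrite /line_adj /K3 /triangle_inc; case: eqP => //= /eqP ij.
rewrite -setCU -card_gt0; have := cardsC [set i; j].
by rewrite cards2 ij card_ord; case: #|~: _|.
Qed.

Lemma triangle_inc_no_star r x y z : ~~ star triangle_inc r x y z.
Proof.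
apply/and4P => [[rx ry rz /card_uniqP uniq3]]; rewrite /triangle_inc !inE in rx ry rz.
have sub : [:: x; y; z] \subset [set~ r].
  by apply/subsetP => w; rewrite !inE => /or3P[]/eqP->; rewrite eq_sym.
by move: (subset_leq_card sub); rewrite uniq3 cardsC1 card_ord.
Qed.

(* Edges of the complete graph on {0,1,2,3} coded by ordered pairs of
   indices: equality and adjacency in its line graph. *)
Definition pair_eq (d d' : nat * nat) : bool :=
  (d.1 == d'.1) && (d.2 == d'.2) || (d.1 == d'.2) && (d.2 == d'.1).

Definition pair_adj (d d' : nat * nat) : bool :=
  ~~ pair_eq d d' && [|| d'.1 == d.1, d'.1 == d.2, d'.2 == d.1 | d'.2 == d.2].

Definition pair_ok (d : nat * nat) : bool := (d.1 < 4) && (d.2 < 4).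

Section Claw.
Variables (V E : finType) (inc : E -> {set V}) (T : finType) (e : rel T) (phi : E -> T).
Hypotheses (sinc : simple_inc inc) (phi_bij : bijective phi)
  (he : forall x y, e (phi x) (phi y) = line_adj inc x y).
Variables (r a b c : V) (pa pb pc : E).
Hypothesis abc_claw : claw inc r a b c pa pb pc.

Let vx (k : nat) : V := nth r [:: r; a; b; c] k.

Lemma vx_eq k l : k < 4 -> l < 4 -> (vx k == vx l) = (k == l).
Proof. by case: abc_claw => uq _ _ _ k4 l4; rewrite nth_uniq. Qed.

Lemma mem_claw_vx v : v \in [set r; a; b; c] -> exists2 k, k < 4 & v = vx k.
Proof. by rewrite !inE -!orbA => /or4P[]/eqP->; [exists 0|exists 1|exists 2|exists 3]. Qed.

(* If no vertex of L sees an odd number of the claw edges, then every edge of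
   Gamma lies inside {r, a, b, c}: an edge with exactly one end v there would
   meet three claw edges (v = r) or one (v a leaf); conclude by connectivity. *)
Lemma claw_confined : symmetric e -> connected_graph e ->
  (forall w, ~~ odd (e w (phi pa) + e w (phi pb) + e w (phi pc))) ->
  forall z, inc z \subset [set r; a; b; c].
Proof.
move=> esym conn even; have [[ic _] [_ hpa hpb hpc]] := (sinc, abc_claw).
set A4 := [set r; a; b; c].
have ra_sub : forall x, x \in [:: pa; pb; pc] -> inc x \subset A4.
  move=> x; rewrite !inE => /or3P[]/eqP->; rewrite ?hpa ?hpb ?hpc;
  by apply/subsetP => t /set2P[]->; rewrite !inE eqxx ?orbT.
have stays x v u : v \in inc x -> u \in inc x -> v \in A4 -> u \in A4.
  move=> vx' ux vA; apply: contraT => uA.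
  have hx : inc x = [set v; u].
    by apply: card2_set2 (ic x) vx' ux _; apply: contraNneq uA => <-.
  have out y : y \in [:: pa; pb; pc] -> u \notin inc y.
    by move/ra_sub/subsetP => sub; apply: contra uA; exact: sub.
  have [k k4 vk] := mem_claw_vx vA.
  move: (even (phi x)); rewrite !he !(line_adj_pendant hx) ?out ?inE ?eqxx ?orbT //.
  rewrite hpa hpb hpc vk !inE -[r]/(vx 0) -[a]/(vx 1) -[b]/(vx 2) -[c]/(vx 3) !vx_eq //.
  by case: k k4 {vk} => [|[|[|[|]]]].
have [psi phiK psiK] := phi_bij.
have A4_closed : closed e [pred w | inc (psi w) \subset A4].
  apply: (intro_closed (sym_connect_sym esym)) => w w'.
  rewrite -[w]psiK -[w']psiK he !inE !phiK => /andP[_ /set0Pn[v /setIP[vw vw']]] sub.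
  have [u _ hw'] := card2_other (ic (psi w')) vw'.
  have vA := subsetP sub v vw.
  rewrite hw'; apply/subsetP => t /set2P[]->; first exact: vA.
  by apply: (stays (psi w') v) => //; rewrite hw' !inE eqxx orbT.
move=> z; have := closed_connect A4_closed (conn (phi pa) (phi z)).
by rewrite !inE !phiK (ra_sub pa) ?inE ?eqxx // => <-.
Qed.

Lemma claw_spanning :
  (forall z, inc z \subset [set r; a; b; c]) -> claw_spans inc a b c pa pb pc.
Proof.
move=> confined z; have [[ic iinc] [_ hpa hpb hpc]] := (sinc, abc_claw).
have [h|[h|[h|h]]] := card2_sub_set4 (ic z) (confined z); last by do 3!right.
- by left; apply: iinc; rewrite h hpa.
- by right; left; apply: iinc; rewrite h hpb.
- by do 2!right; left; apply: iinc; rewrite h hpc.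
Qed.

Let pair_set (d : nat * nat) : {set V} := [set vx d.1; vx d.2].

Lemma pair_set_line x y d d' : pair_ok d -> pair_ok d' ->
  inc x = pair_set d -> inc y = pair_set d' ->
  ((x == y) = pair_eq d d') * (line_adj inc x y = pair_adj d d').
Proof.
case/andP=> d1 d2 /andP[d1' d2'] hx hy; have [_ iinc] := sinc.
have eqE : (x == y) = pair_eq d d' by rewrite -(inj_eq iinc) hx hy set2_eqE !vx_eq.
split=> //; by rewrite /line_adj /pair_adj eqE hy setI2_neq0 hx !inE !vx_eq // -!orbA.
Qed.

Lemma graph_iso_of_codes n (F : rel 'I_n) (es : seq E) (cs : seq (nat * nat)) :
  size es = n -> (forall z, z \in es) -> all pair_ok cs ->
  (forall k, k < n -> inc (nth pa es k) = pair_set (nth (0, 0) cs k)) ->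
  (forall i j : 'I_n, pair_eq (nth (0, 0) cs i) (nth (0, 0) cs j) = (i == j)) ->
  (forall i j : 'I_n, pair_adj (nth (0, 0) cs i) (nth (0, 0) cs j) = F i j) ->
  graph_iso F e.
Proof.
move=> size_es cover ok_cs hinc code_inj code_adj.
have ok (i : 'I_n) : pair_ok (nth (0, 0) cs i).
  by case: (ltnP i (size cs)) => [/(all_nthP (0, 0) ok_cs)|/(nth_default (0, 0))->].
have line i j := pair_set_line (ok i) (ok j) (hinc _ (ltn_ord i)) (hinc _ (ltn_ord j)).
pose f (i : 'I_n) := phi (nth pa es i).
have f_inj : injective f.
  by move=> i j /(bij_inj phi_bij)/eqP; rewrite line code_inj => /eqP.
exists f; split=> [|i j]; last by rewrite he line code_adj.
apply: (inj_card_bij f_inj); rewrite card_ord -(bij_eq_card phi_bij) -size_es.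
by apply: leq_trans (card_size es); apply/subset_leq_card/subsetP => x _; exact: cover.
Qed.

Hypothesis abc_spans : claw_spans inc a b c pa pb pc.

Lemma claw_cover (es : seq E) : pa \in es -> pb \in es -> pc \in es ->
  (forall z, inc z = [set a; b] -> z \in es) -> (forall z, inc z = [set b; c] -> z \in es) ->
  (forall z, inc z = [set c; a] -> z \in es) -> forall z, z \in es.
Proof.
by move=> ? ? ? ? ? ? z; case: (abc_spans z) => [->|[->|[->|[|[|]]]]]; auto.
Qed.

Lemma edge_in (es : seq E) x (A : {set V}) : inc x = A -> x \in es ->
  forall z, inc z = A -> z \in es.
Proof. by have [_ iinc] := sinc; move=> hx xes z hz; rewrite (iinc z x) // hx. Qed.


Lemma triangle_case : (forall z, inc z <> [set a; b]) -> (forall z, inc z <> [set b; c]) ->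
  (forall z, inc z <> [set c; a]) -> graph_iso K3 e.
Proof.
move=> nab nbc nca; have [_ hpa hpb hpc] := abc_claw.
apply: (graph_iso_of_codes (es := [:: pa; pb; pc]) (cs := [:: (0, 1); (0, 2); (0, 3)])) => //.
- apply: claw_cover; [idtac .. | move=> z /nab[] | move=> z /nbc[] | move=> z /nca[]];
  by rewrite !inE eqxx ?orbT.
- by case=> [|[|[|]]] //= _; rewrite ?hpa ?hpb ?hpc.
- by do 2!case=> [[|[|[|?]]] ?].
- by do 2!case=> [[|[|[|?]]] ?].
Qed.

(* One edge among the leaves: L is the diamond F1, its non-adjacent pair
   being the disjoint edges rc and ab. *)
Lemma diamond_case xab : inc xab = [set a; b] -> (forall z, inc z <> [set b; c]) ->
  (forall z, inc z <> [set c; a]) -> graph_iso F1 e.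
Proof.
move=> hab nbc nca; have [_ hpa hpb hpc] := abc_claw.
apply: (graph_iso_of_codes (es := [:: pc; xab; pa; pb])
                           (cs := [:: (0, 3); (1, 2); (0, 1); (0, 2)])) => //.
- apply: claw_cover; [idtac .. | apply: (edge_in hab) | move=> z /nbc[] | move=> z /nca[]];
  by rewrite !inE eqxx ?orbT.
- by case=> [|[|[|[|]]]] //= _; rewrite ?hpa ?hpb ?hpc ?hab.
- by do 2!case=> [[|[|[|[|?]]]] ?].
- by do 2!case=> [[|[|[|[|?]]]] ?].
Qed.

(* Two edges among the leaves: L is the wheel F2 with hub rb and rim
   ra, rc, bc, ab. *)
Lemma wheel_case xab xbc : inc xab = [set a; b] -> inc xbc = [set b; c] ->
  (forall z, inc z <> [set c; a]) -> graph_iso F2 e.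
Proof.
move=> hab hbc nca; have [_ hpa hpb hpc] := abc_claw.
apply: (graph_iso_of_codes (es := [:: pa; pc; xbc; xab; pb])
                           (cs := [:: (0, 1); (0, 3); (2, 3); (1, 2); (0, 2)])) => //.
- apply: claw_cover;
    [idtac .. | apply: (edge_in hab) | apply: (edge_in hbc) | move=> z /nca[]];
  by rewrite !inE eqxx ?orbT.
- by case=> [|[|[|[|[|]]]]] //= _; rewrite ?hpa ?hpb ?hpc ?hab ?hbc.
- by do 2!case=> [[|[|[|[|[|?]]]]] ?].
- by do 2!case=> [[|[|[|[|[|?]]]]] ?].
Qed.

(* All three edges among the leaves: L is the octahedron F3 = L(K4), whose
   non-adjacent pairs are the three pairs of disjoint edges. *)
Lemma octahedron_case xab xbc xca : inc xab = [set a; b] -> inc xbc = [set b; c] ->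
  inc xca = [set c; a] -> graph_iso F3 e.
Proof.
move=> hab hbc hca; have [_ hpa hpb hpc] := abc_claw.
apply: (graph_iso_of_codes (es := [:: pa; xbc; pb; xca; pc; xab])
                           (cs := [:: (0, 1); (2, 3); (0, 2); (3, 1); (0, 3); (1, 2)])) => //.
- apply: claw_cover;
    [idtac .. | apply: (edge_in hab) | apply: (edge_in hbc) | apply: (edge_in hca)];
  by rewrite !inE eqxx ?orbT.
- by case=> [|[|[|[|[|[|]]]]]] //= _; rewrite ?hpa ?hpb ?hpc ?hab ?hbc ?hca.
- by do 2!case=> [[|[|[|[|[|[|?]]]]]] ?].
- by do 2!case=> [[|[|[|[|[|[|?]]]]]] ?].
Qed.

End Claw.

(* An even star triangle confines Gamma to four vertices, so L is one of
   the exceptional graphs F1, F2, F3 or the triangle. *)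
Lemma even_star_exceptional (V E : finType) (inc : E -> {set V}) (T : finType) (e : rel T)
    (phi : E -> T) r p1 p2 p3 :
  simple_inc inc -> bijective phi -> (forall x y, e (phi x) (phi y) = line_adj inc x y) ->
  symmetric e -> connected_graph e -> star inc r p1 p2 p3 ->
  (forall w, ~~ odd (e w (phi p1) + e w (phi p2) + e w (phi p3))) ->
  [\/ graph_iso F1 e, graph_iso F2 e, graph_iso F3 e | graph_iso K3 e].
Proof.
move=> sinc phi_bij he esym conn st even.
have [a [b [c cl]]] := star_claw sinc st.
have sp := claw_spanning sinc cl (claw_confined sinc phi_bij he cl esym conn even).
have [cl1 sp1] := (claw_rotate cl, spans_rotate sp).
have [cl2 sp2] := (claw_rotate cl1, spans_rotate sp1).
(* Which of the edges ab, bc, ca exist; rotations reduce to four shapes. *)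
have [[xab hab]|nab] := edge_on_set inc [set a; b];
have [[xbc hbc]|nbc] := edge_on_set inc [set b; c];
have [[xca hca]|nca] := edge_on_set inc [set c; a].
- by constructor 3; apply: (octahedron_case sinc phi_bij he cl sp hab hbc hca).
- by constructor 2; apply: (wheel_case sinc phi_bij he cl sp hab hbc nca).
- by constructor 2; apply: (wheel_case sinc phi_bij he cl2 sp2 hca hab nbc).
- by constructor 1; apply: (diamond_case sinc phi_bij he cl sp hab nbc nca).
- by constructor 2; apply: (wheel_case sinc phi_bij he cl1 sp1 hbc hca nab).
- by constructor 1; apply: (diamond_case sinc phi_bij he cl1 sp1 hbc nca nab).
- by constructor 1; apply: (diamond_case sinc phi_bij he cl2 sp2 hca nab nbc).
- by constructor 4; apply: (triangle_case sinc phi_bij he cl sp nab nbc nca).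
Qed.

Local Open Scope group_scope.

Section Phase.
Variables (G : groupType) (s : G).
Hypotheses (s_invol : s * s = 1) (s_central : forall g : G, s * g = g * s).

Lemma invg_s : s^-1 = s.
Proof. exact: mulg1_eq. Qed.

Lemma mulss g : s * (s * g) = g.
Proof. by rewrite mulgA s_invol mul1g. Qed.

Lemma mulgsC g h : g * (s * h) = s * (g * h).
Proof. by rewrite mulgA -s_central mulgA. Qed.

Lemma invg_sM g : (s * g)^-1 = s * g^-1.
Proof. by rewrite invgM invg_s s_central. Qed.

(* The gain of a star triangle under any phase telescopes to s^3 = s. *)
Lemma star_triangle_gain x y z : (s * x^-1 * y) * (s * y^-1 * z) * (s * z^-1 * x) = s.
Proof.
by rewrite -!mulgA (mulgsC z) mulVKg (mulgsC y^-1) mulss mulVKg mulVg mulg1.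
Qed.

Section GainLine.
Variables (T : finType) (e : rel T) (zeta : T -> T -> G).

Lemma gain_line_odd_triangles : gain_line_graph s e zeta ->
  forall v1 v2 v3, e v1 v2 -> e v2 v3 -> e v1 v3 ->
    odd_triangle e v1 v2 v3 -> triangle_gain zeta v1 v2 v3 = s.
Proof.
case=> V [E [inc [phi [H [sinc [psi phiK psiK] he phase]]]]] v1 v2 v3.
rewrite -(psiK v1) -(psiK v2) -(psiK v3) !he => a12 a23 a13 [w].
rewrite -(psiK w) !he.
move: (psi v1) (psi v2) (psi v3) (psi w) a12 a23 a13 => p1 p2 p3 q a12 a23 a13.
have [[r /and3P[r1 r2 r3]] _ | even] := line_triangle_star_or_even sinc a12 a23 a13; last first.
  by rewrite (negbTE (even q)).
have a31 : line_adj inc p3 p1 by rewrite line_adj_sym.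
rewrite /triangle_gain -(phase _ _ _ a12 r1 r2) -(phase _ _ _ a23 r2 r3).
by rewrite -(phase _ _ _ a31 r3 r1) star_triangle_gain.
Qed.

Definition star_phase (V E : finType) (inc : E -> {set V}) (phi : E -> T)
    (r : V) (q : E) : G :=
  if [pick p | r \in inc p] is Some p0 then
    (if q == p0 then 1 else s * zeta (phi p0) (phi q))
  else 1.

Lemma phase_of_star_gains (V E : finType) (inc : E -> {set V}) (phi : E -> T) :
  simple_inc inc -> bijective phi -> (forall x y, e (phi x) (phi y) = line_adj inc x y) ->
  gain_graph e zeta ->
  (forall r p1 p2 p3, star inc r p1 p2 p3 -> triangle_gain zeta (phi p1) (phi p2) (phi p3) = s) ->
  gain_line_graph s e zeta.
Proof.
move=> sinc phi_bij he zeta_gain star_gain.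
exists V, E, inc, phi, (star_phase inc phi); split => // p q r pq rp rq.
have inv x y : x != y -> r \in inc x -> r \in inc y ->
    zeta (phi y) (phi x) = (zeta (phi x) (phi y))^-1.
  by move=> xy rx ry; apply: zeta_gain; rewrite he (line_adj_common xy rx ry).
rewrite /star_phase; case: pickP => [p0 rp0|]; last by move/(_ p); rewrite rp.
have /andP[{}pq _] := pq.
(* Either p or q is the reference edge p0, or p, p0, q is a star triangle. *)
case: (eqVneq p p0) => [pp0|pp0]; case: (eqVneq q p0) => [qp0|qp0].
- by move: pq; rewrite pp0 qp0 eqxx.
- by rewrite invg1 mulg1 pp0 mulss.
- by rewrite mulg1 invg_sM mulss qp0 -inv // eq_sym.
have tri : zeta (phi p) (phi p0) * zeta (phi p0) (phi q) = s * zeta (phi p) (phi q).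
  have := star_gain r p p0 q; rewrite /star /= !inE !negb_or rp rp0 rq pp0 pq eq_sym qp0.
  by move=> /(_ isT) <-; rewrite /triangle_gain (inv p q) // mulgVK.
by rewrite invg_sM -!mulgA mulss -(inv p0 p) 1?eq_sym // mulgsC tri mulss.
Qed.

Lemma K3_gain_line : gain_graph e zeta -> graph_iso K3 e -> gain_line_graph s e zeta.
Proof.
move=> zeta_gain [f [f_bij hf]].
apply: (phase_of_star_gains triangle_inc_simple f_bij _ zeta_gain) => [i j|r x y z st].
  by rewrite hf triangle_inc_adj.
by have := triangle_inc_no_star r x y z; rewrite st.
Qed.

End GainLine.
End Phase.

Theorem mainTheorem6 (G : groupType) (s : G) (T : finType) (e : rel T)
    (zeta : T -> T -> G) :
  s * s = 1 -> s <> 1 -> (forall g : G, s * g = g * s) ->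
  simple_graph e -> gain_graph e zeta -> connected_graph e ->
  is_line_graph e ->
  ~ graph_iso F1 e -> ~ graph_iso F2 e -> ~ graph_iso F3 e ->
  (gain_line_graph s e zeta <->
   forall v1 v2 v3 : T, e v1 v2 -> e v2 v3 -> e v1 v3 ->
     odd_triangle e v1 v2 v3 -> triangle_gain zeta v1 v2 v3 = s).
Proof.
move=> s_invol _ s_central [esym _] zeta_gain conn.
move=> [V [E [inc [sinc [phi [phi_bij he]]]]]] nF1 nF2 nF3.
split; first exact: gain_line_odd_triangles.
move=> odd_gain.
case: (boolP [exists r, exists p1, exists p2, exists p3, star inc r p1 p2 p3 &&
                ~~ [exists w, odd (e w (phi p1) + e w (phi p2) + e w (phi p3))]]).
  case/existsP=> r /existsP[p1 /existsP[p2 /existsP[p3 /andP[st /existsPn even]]]].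
  have [/nF1[]|/nF2[]|/nF3[]|] := even_star_exceptional sinc phi_bij he esym conn st even.
  exact: K3_gain_line.
move=> /existsPn all_odd.
apply: (phase_of_star_gains s_invol s_central sinc phi_bij he zeta_gain) => r p1 p2 p3 st.
have [a12 a23 a13] := star_adj st.
apply: odd_gain; rewrite ?he //.
have /existsPn/(_ p1)/existsPn/(_ p2)/existsPn/(_ p3) := all_odd r.
by rewrite st negbK => /existsP.
Qed.
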